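(* Assume the graph $(\overline{\mathbb V},\overline E)$ is connected. Let $\sigma$ be a uniform random bijection from $\{1,\dots,|\overline E|\}$ to $\overline E$, and let $\eta^*$ be the configuration produced by the perfect simulation procedure described in the context. Then the law of $\eta^*$ is the unique invariant measure of the spiking disagreement process $\eta(t)$.
   Context: Graph: finite oriented graph $(\overline{\mathbb V},\overline E)$ with internal vertices $\mathbb V$, boundary vertices $\partial\mathbb V$; $E$ = edges with both endpoints in $\mathbb V$, $\partial E$ = edges with one endpoint in $\partial\mathbb V$ (written $ij$ with $j\in\partial\mathbb V$); no edges between boundary vertices. Two edges are neighbors if they share exactly one vertex. Spiking disagreement process: Markov process on $\mathcal E_n:=\{\eta\in\{0,1\}^{\overline E}:\eta_{ij}=1\ \forall ij\in\partial E,\ \text{and }\eta_{ij}+\eta_{k\ell}>0\text{ whenever }ij,k\ell\in E\text{ share exactly one vertex}\}$ with generator $L^\eta f(\eta)=\sum_{ij\in\overline E}\eta_{ij}[f(H_{ij}\eta)-f(\eta)]$, where $(H_{ij}\eta)_{k\ell}=0$ if $k\ell=ij$ and $j\in\mathbb V$; $(H_{ij}\eta)_{k\ell}=1$ if $|\{k,\ell\}\cap\{i,j\}|=1$; and $(H_{ij}\eta)_{k\ell}=\eta_{k\ell}$ otherwise. (It is the indicator process $\eta_{ij}(t)=\mathbf 1\{O_i(t)\neq O_j(t)\}$ of disagreement edges of the opinion process.) Perfect simulation: set $\eta_{ij}[0]=0$ for $ij\in E$, $\eta_{ij}[0]=1$ for $ij\in\partial E$, and $E[0]=\partial E$. For $n\ge0$: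 $\eta_{ij}[n+1]=\eta_{ij}[n]+\mathbf 1\{ij\notin E[n]\text{ and }ij\text{ is a neighbor of }\sigma(n+1)\}$ and $E[n+1]=E[n]\cup\{\sigma(n+1)\}\cup\{\text{neighbors of }\sigma(n+1)\}$. $\eta^*:=\eta[n]$ for the first $n$ with $E[n]=\overline E$. *)

From HB Require Import structures.
From mathcomp Require Import all_boot all_order all_algebra.
Set Implicit Arguments. Unset Strict Implicit. Unset Printing Implicit Defensive.
Import Order.TTheory GRing.Theory Num.Theory.
Local Open Scope ring_scope.

Section SpikingDisagreement.
(* Vertices: the finite type T (= \overline{V}); boundary vertices: bnd;
   internal vertices: ~: bnd.  Oriented edges \overline{E}: the set E of
   ordered pairs (i, j). *)
Variables (T : finType) (bnd : {set T}) (E : {set T * T}).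

Definition edge : finType := {e : T * T | e \in E}.

Definition config := {ffun edge -> bool}.

(* ij is in E (both endpoints internal) *)
Definition internal (e : edge) : bool :=
  ((val e).1 \notin bnd) && ((val e).2 \notin bnd).

Definition neighb (e f : T * T) : bool :=
  #|[set e.1; e.2] :&: [set f.1; f.2]| == 1%N.

Definition admissible (eta : config) : bool :=
  [forall e : edge, ~~ internal e ==> eta e] &&
  [forall e : edge, forall f : edge,
     [&& internal e, internal f & neighb (val e) (val f)] ==> eta e || eta f].

Definition spike (e : edge) (eta : config) : config :=
  [ffun f : edge =>
     if (f == e) && ((val e).2 \notin bnd) then false
     else if neighb (val f) (val e) then true
     else eta f].

Definition generator (R : pzRingType) (g : config -> R) (eta : config) : R :=
  \sum_(e : edge) (eta e)%:R * (g (spike e eta) - g eta).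

Definition prob_on_states (R : numDomainType) (mu : config -> R) : Prop :=
  [/\ forall eta, 0 <= mu eta,
      forall eta, ~~ admissible eta -> mu eta = 0
    & \sum_(eta : config) mu eta = 1].

Definition invariant_measure (R : numDomainType) (mu : config -> R) : Prop :=
  forall g : config -> R,
    \sum_(eta : config | admissible eta) mu eta * generator g eta = 0.

Definition nedges : nat := #|edge|.

Definition sim_init : config * {set edge} :=
  ([ffun e => ~~ internal e], [set e | ~~ internal e]).

Definition sim_step (s : config * {set edge}) (x : edge) : config * {set edge} :=
  ([ffun f => s.1 f || ((f \notin s.2) && neighb (val f) (val x))],
   s.2 :|: [set x] :|: [set f | neighb (val f) (val x)]).

(* sim sigma n = (eta[n], E[n]); sigma is indexed from 0, i.e. the paper's
   sigma(n+1) is sigma n here *)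
Fixpoint sim (sigma : {ffun 'I_nedges -> edge}) (n : nat) : config * {set edge} :=
  match n with
  | 0 => sim_init
  | n'.+1 =>
      match insub n' with
      | Some i => sim_step (sim sigma n') (sigma i)
      | None => sim sigma n'
      end
  end.

Definition first_full (sigma : {ffun 'I_nedges -> edge}) : nat :=
  find (fun n => (sim sigma n).2 == setT) (iota 0 nedges.+1).

Definition eta_star (sigma : {ffun 'I_nedges -> edge}) : config :=
  (sim sigma (first_full sigma)).1.

Definition bijections : {set {ffun 'I_nedges -> edge}} :=
  [set sigma : {ffun 'I_nedges -> edge} | injectiveb sigma].

Definition law_eta_star (R : fieldType) (eta : config) : R :=
  #|[set sigma in bijections | eta_star sigma == eta]|%:R / #|bijections|%:R.

End SpikingDisagreement.

Definition graph_connected (T : finType) (E : {set T * T}) : Prop :=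
  forall x y : T, connect [rel u v | ((u, v) \in E) || ((v, u) \in E)] x y.

(* On admissible states the generator is L g = sum_e (g o H_e - g), because H_e fixes eta
   whenever eta_e = 0.  Hence an invariant law is stationary for the chain that spikes a
   uniformly chosen edge, and so for the chain that applies a uniformly chosen word of
   |E| spikes.  The word listing every edge sends all admissible states to one and the same
   configuration, which makes this chain a strict l1-contraction on signed measures of
   total mass 0: there is at most one invariant law.

   Read off an ordering sigma of the edges, eta* is 1 on the boundary and 1 on an internal
   edge iff one of its neighbours comes earlier in sigma.  Spiking the k-th edge of sigma in
   this configuration gives the configuration of sigma with that edge moved to the front,
   and moving to the front permutes the orderings, so the law of eta* annihilates L g. *)

From HB Require Import structures.
From Stdlib Require Import FunctionalExtensionality.
From mathcomp Require Import all_boot all_order all_algebra zify.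
Import Order.TTheory GRing.Theory Num.Theory.
Set Implicit Arguments. Unset Strict Implicit. Unset Printing Implicit Defensive.

Fixpoint words (I : Type) (r : seq I) (n : nat) : seq (seq I) :=
  if n is n'.+1 then [seq i :: w | i <- r, w <- words r n'] else [:: [::]].

Lemma size_words (I : Type) (r : seq I) n : size (words r n) = (size r ^ n)%N.
Proof. by elim: n => //= n IH; rewrite size_allpairs IH expnS. Qed.

Lemma mem_words (I : eqType) (r w : seq I) : all (mem r) w -> w \in words r (size w).
Proof.
elim: w => [|i w IH] /=; first by rewrite inE.
by case/andP=> ri /IH wr; apply: allpairs_f.
Qed.

Definition run (I S : Type) (F : I -> S -> S) (w : seq I) (x : S) : S :=
  foldl (fun y i => F i y) x w.

Section MoveToFront.
Variable n : nat.

(* [front k j] is the new position of [j] once position [k] has been moved to the front. *)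
Definition front_nat (k j : nat) : nat :=
  if j == k then 0 else if j < k then j.+1 else j.

Lemma front_nat_lt (k j : 'I_n) : front_nat k j < n.
Proof. by move: (ltn_ord j) (ltn_ord k); rewrite /front_nat; case: (ltngtP j k); lia. Qed.

Definition front (k j : 'I_n) : 'I_n := Ordinal (front_nat_lt k j).

Lemma front_inj k : injective (front k).
Proof.
move=> i j /(congr1 val) /=; rewrite /front_nat => eq_ij; apply: val_inj => /=.
by move: eq_ij; case: (ltngtP i k); case: (ltngtP j k); lia.
Qed.

Lemma front_lt k i j :
  (front k j < front k i) = ((j == k) && (i != k)) || [&& j != k, i != k & j < i].
Proof.
rewrite /= /front_nat -!(inj_eq val_inj) /=.
by case: (ltngtP i k); case: (ltngtP j k) => //=; lia.
Qed.
End MoveToFront.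

Lemma exists_ord_ltS n (P : pred 'I_n) (i : 'I_n) :
  [exists k : 'I_n, (k < i.+1)%N && P k] = [exists k : 'I_n, (k < i)%N && P k] || P i.
Proof.
apply/existsP/orP => [[k /andP[]]|[/existsP[k /andP[ki Pk]]|Pi]].
- rewrite ltnS leq_eqVlt => /orP[/eqP/val_inj-> | ki Pk]; first by right.
  by left; apply/existsP; exists k; rewrite ki.
- by exists k; rewrite Pk ltnW.
- by exists i; rewrite ltnSn.
Qed.

Local Open Scope ring_scope.

Definition stationary (R : pzRingType) (S : finType) (I : Type)
    (F : I -> S -> S) (r : seq I) (mu : S -> R) : Prop :=
  forall g : S -> R,
    \sum_x mu x * \sum_(i <- r) g (F i x) = (size r)%:R * \sum_x mu x * g x.

Section Coalescence.
Variables (R : realFieldType) (S : finType) (I : Type) (F : I -> S -> S).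

Lemma stationary_words r (mu : S -> R) n :
  stationary F r mu -> stationary (run F) (words r n) mu.
Proof.
move=> st; elim: n => [|n IH] g.
  by rewrite mul1r; apply: eq_bigr => x _; rewrite big_seq1.
rewrite size_words expnS natrM -mulrA -size_words -IH.
under eq_bigr do rewrite big_allpairs_dep.
exact: (st (fun y => \sum_(w <- words r n) g (run F w y))).
Qed.

Variables (A : pred S) (r : seq I).

Definition coalescing (i : I) : bool :=
  [forall x, forall y, A x ==> A y ==> (F i x == F i y)].

Definition residual (x y : S) : R :=
  \sum_(i <- r | ~~ coalescing i) (F i x == y)%:R.

Variable d : S -> R.
Hypotheses (d_out : forall x, ~~ A x -> d x = 0) (d_sum : \sum_x d x = 0)
  (d_st : stationary F r d).

Lemma stationary_residual y : (size r)%:R * d y = \sum_x d x * residual x y.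
Proof.
have /esym := d_st (fun z => (z == y)%:R).
rewrite (bigD1 y) //= eqxx mulr1 big1 ?addr0 => [|x /negbTE->]; last by rewrite mulr0.
move=> ->; under eq_bigr do rewrite (bigID coalescing) /= mulrDr.
rewrite big_split /= -[RHS]add0r; congr (_ + _).
(* The coalescing words contribute a multiple of [\sum_x d x = 0]. *)
have [x0 Ax0|A0] := pickP A; last by apply: big1 => x _; rewrite d_out ?mul0r ?A0.
transitivity (\sum_x d x * \sum_(i <- r | coalescing i) (F i x0 == y)%:R : R).
  apply: eq_bigr => x _; have [Ax|/d_out->] := boolP (A x); last by rewrite !mul0r.
  congr (_ * _); apply: eq_bigr => i /forallP/(_ x)/forallP/(_ x0).
  by rewrite Ax Ax0 => /eqP->.
by rewrite -mulr_suml d_sum mul0r.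
Qed.

Lemma sum_residual x : \sum_y residual x y = (count (predC coalescing) r)%:R.
Proof.
rewrite exchange_big /= -sum1_count natr_sum; apply: eq_bigr => i _.
by rewrite (bigD1 (F i x)) //= eqxx big1 ?addr0 // => y; rewrite eq_sym => /negbTE->.
Qed.

Lemma stationary_eq0 : has coalescing r -> d =1 fun _ => 0.
Proof.
move=> hasC; set N := size r; set K := count (predC coalescing) r.
have KN : (K < N)%N.
  by move: hasC; rewrite has_count /K /N -(count_predC coalescing); lia.
have res_ge0 x y : 0 <= residual x y by apply: sumr_ge0 => *; apply: ler0n.
have norm_le y : N%:R * `|d y| <= \sum_x `|d x| * residual x y.
  rewrite -normr_nat -normrM stationary_residual; apply: le_trans (ler_norm_sum _ _ _) _.
  by apply: ler_sum => x _; rewrite normrM (ger0_norm (res_ge0 _ _)).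
have total_le : N%:R * \sum_x `|d x| <= K%:R * \sum_x `|d x|.
  rewrite mulr_sumr; apply: le_trans (ler_sum _ (fun y _ => norm_le y)) _.
  rewrite exchange_big mulr_sumr le_eqVlt; apply/orP; left; apply/eqP.
  by apply: eq_bigr => x _; rewrite -mulr_sumr sum_residual mulrC.
have norm_sum0 : \sum_x `|d x| = 0.
  apply/eqP; rewrite eq_le sumr_ge0 ?andbT => [|x _]; last exact: normr_ge0.
  have : (N%:R - K%:R) * \sum_x `|d x| <= 0 by rewrite mulrBl subr_le0.
  by rewrite pmulr_rle0 // subr_gt0 ltr_nat.
move=> x; apply/normr0_eq0.
by have /psumr_eq0P := norm_sum0; apply => // y _; apply: normr_ge0.
Qed.

End Coalescence.

Lemma sum_uniform_pushforward (R : fieldType) (X Y : finType) (B : {set X})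
    (h : X -> Y) (G : Y -> R) :
  \sum_y #|[set x in B | h x == y]|%:R / #|B|%:R * G y = (\sum_(x in B) G (h x)) / #|B|%:R.
Proof.
under eq_bigr do rewrite mulrAC; rewrite -mulr_suml; congr (_ / _).
rewrite (partition_big h predT) //=; apply: eq_bigr => y _.
rewrite mulr_natl -sumr_const; apply: eq_big => x; first by rewrite inE.
by rewrite inE => /andP[_ /eqP->].
Qed.

Section SpikingProcess.
Variables (T : finType) (bnd : {set T}) (E : {set T * T}).
Hypothesis loopless : forall e, e \in E -> e.1 != e.2.
Hypothesis bnd_orient : forall e, e \in E -> e.1 \notin bnd.
Local Notation edge := (edge E).
Local Notation config := (config E).
Local Notation internal := (@internal T bnd E).
Local Notation admissible := (@admissible T bnd E).
Local Notation spike := (@spike T bnd E).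

Lemma internalE (e : edge) : internal e = ((val e).2 \notin bnd).
Proof. by rewrite /internal (bnd_orient (valP e)). Qed.

Lemma neighb_irr (e : edge) : neighb (val e) (val e) = false.
Proof. by rewrite /neighb setIid cards2 (loopless (valP e)). Qed.

Lemma neighbC (x y : T * T) : neighb x y = neighb y x.
Proof. by rewrite /neighb setIC. Qed.

Lemma admissible_bnd (eta : config) f : admissible eta -> ~~ internal f -> eta f.
Proof. by case/andP=> /forallP bndP _; apply/implyP. Qed.

Lemma admissible_neighb (eta : config) e f : admissible eta ->
  internal e -> internal f -> neighb (val e) (val f) -> eta e || eta f.
Proof.
case/andP=> _ /forallP/(_ e)/forallP/(_ f) /implyP neighbP ie if_ nef.
by apply: neighbP; rewrite ie if_.
Qed.

Lemma spike_fixed (eta : config) e : admissible eta -> ~~ eta e -> spike e eta = eta.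
Proof.
move=> ad /negbTE ee; have ie : internal e.
  by apply: contraT => /(admissible_bnd ad); rewrite ee.
apply/ffunP => f; rewrite ffunE; case: eqP => [->|_] /=; first by rewrite -internalE ie ee.
case nb: (neighb _ _) => //; have [if_|/(admissible_bnd ad)//] := boolP (internal f).
by move: (admissible_neighb ad ie if_); rewrite neighbC nb ee => /(_ isT).
Qed.

Lemma spike_bnd (eta : config) e f : ~~ internal f ->
  spike e eta f = neighb (val f) (val e) || eta f.
Proof.
rewrite internalE negbK ffunE => fb; case: eqP => [fe|_] /=; last by case: ifP.
by rewrite -fe fb /=; case: ifP.
Qed.

Lemma generatorE (R : pzRingType) (g : config -> R) (eta : config) :
  admissible eta -> generator bnd g eta = \sum_e (g (spike e eta) - g eta).
Proof.
move=> ad; rewrite /generator; apply: eq_bigr => e _; case ee: (eta e); first by rewrite mul1r.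
by rewrite spike_fixed ?ee // subrr mulr0.
Qed.

Lemma invariant_stationary (R : realFieldType) (mu : config -> R) :
  (forall eta, ~~ admissible eta -> mu eta = 0) -> invariant_measure bnd mu ->
  stationary spike (enum edge) mu.
Proof.
move=> mu_out inv g; under eq_bigr do rewrite big_enum /=.
rewrite -cardE mulr_sumr; apply/eqP; rewrite -subr_eq0 -sumrB.
apply/eqP; rewrite -[RHS](inv g) [RHS]big_mkcond /=; apply: eq_bigr => eta _.
case: ifP => [ad|/negbT/mu_out->]; last by rewrite !mul0r mulr0 subrr.
by rewrite generatorE // sumrB sumr_const mulrBr mulrCA mulr_natl.
Qed.

Local Notation spikes := (run spike).

Lemma spikes_bnd s (eta : config) f : ~~ internal f -> eta f -> spikes s eta f.
Proof.
elim: s eta => //= e s IH eta nf ef; apply: IH => //.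
by rewrite spike_bnd // ef orbT.
Qed.

Lemma spikes_internal s (eta eta' : config) f :
  internal f -> f \in s -> spikes s eta f = spikes s eta' f.
Proof.
move=> if_; elim/last_ind: s => // s e IH.
rewrite /run !foldl_rcons -!/(run _ s _) !ffunE mem_rcons inE.
case: (f =P e) => [<-|_] /=; first by rewrite -internalE if_.
by case: ifP => // _; apply: IH.
Qed.

Lemma spikes_enum_coalescing : coalescing spikes admissible (enum edge).
Proof.
apply/forallP => eta; apply/forallP => eta'; apply/implyP => ad; apply/implyP => ad'.
apply/eqP/ffunP => f; have [if_|nf] := boolP (internal f).
  by apply: spikes_internal; rewrite ?mem_enum.
by rewrite !spikes_bnd // admissible_bnd.
Qed.

Theorem invariant_measure_unique (R : realFieldType) (x y : config -> R) :
  prob_on_states bnd x -> invariant_measure bnd x ->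
  prob_on_states bnd y -> invariant_measure bnd y -> x =1 y.
Proof.
case=> _ x_out x_sum inv_x [_ y_out y_sum] inv_y.
pose d eta := x eta - y eta.
have d_out eta : ~~ admissible eta -> d eta = 0.
  by move=> nad; rewrite /d x_out ?y_out ?subrr.
have d_sum : \sum_eta d eta = 0 by rewrite sumrB x_sum y_sum subrr.
have d_inv : invariant_measure bnd d.
  by move=> g; under eq_bigr do rewrite mulrBl; rewrite sumrB inv_x inv_y subrr.
have d_st := stationary_words #|edge| (invariant_stationary d_out d_inv).
have coal : has (coalescing spikes admissible) (words (enum edge) #|edge|).
  by apply/hasP; exists (enum edge); rewrite ?spikes_enum_coalescing // cardE mem_words ?allss.
by move=> eta; apply/eqP; rewrite -subr_eq0 -/(d eta) (stationary_eq0 d_out d_sum d_st coal).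
Qed.

Local Notation m := (nedges E).
Local Notation order := {ffun 'I_m -> edge}.

Lemma order_onto (sigma : order) : injective sigma -> forall f, exists i, sigma i = f.
Proof.
move=> inj f; have /codomP[i ->] := inj_card_onto inj (eq_leq (esym (card_ord m))) f.
by exists i.
Qed.

Definition precedes (sigma : order) (g f : edge) : bool :=
  [exists i, exists j, [&& sigma i == f, sigma j == g & (j < i)%N]].

Lemma precedesE (sigma : order) i j : injective sigma ->
  precedes sigma (sigma j) (sigma i) = (j < i)%N.
Proof.
move=> inj; apply/existsP/idP => [[i' /existsP[j' /and3P[/eqP/inj-> /eqP/inj-> //]]]|ji].
by exists i; apply/existsP; exists j; rewrite !eqxx.
Qed.

Definition order_config (sigma : order) : config :=
  [ffun f => ~~ internal f || [exists g, neighb (val f) (val g) && precedes sigma g f]].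

Lemma order_config_admissible (sigma : order) :
  injective sigma -> admissible (order_config sigma).
Proof.
move=> inj; apply/andP; split.
  by apply/forallP => f; apply/implyP => nf; rewrite ffunE nf.
apply/forallP => e; apply/forallP => f; apply/implyP.
have [[i <-] [j <-]] := (order_onto inj e, order_onto inj f).
move=> /and3P [ie if_ nef].
rewrite !ffunE ie if_ /=.
case: (ltngtP i j) => [ij|ji|/val_inj ij]; last by rewrite ij neighb_irr in nef.
  by apply/orP; right; apply/existsP; exists (sigma i); rewrite neighbC nef precedesE.
by apply/orP; left; apply/existsP; exists (sigma j); rewrite nef precedesE.
Qed.

Definition sim_covered (sigma : order) (n : nat) : {set edge} :=
  [set f | ~~ internal f || [exists i : 'I_m,
     (i < n)%N && ((sigma i == f) || neighb (val f) (val (sigma i)))]].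

Definition sim_config (sigma : order) (n : nat) : config :=
  [ffun f => ~~ internal f || [exists i : 'I_m,
     [&& (i < n)%N, neighb (val f) (val (sigma i)) & f \notin sim_covered sigma i]]].

Lemma simE (sigma : order) n :
  (n <= m)%N -> sim bnd sigma n = (sim_config sigma n, sim_covered sigma n).
Proof.
have no_lt0 (P : pred 'I_m) : [exists i : 'I_m, (i < 0)%N && P i] = false.
  by apply/existsP => -[i]; rewrite ltn0.
elim: n => [_|n IH lt_nm].
  rewrite /sim /sim_init; congr pair; [apply/ffunP => f | apply/setP => f].
    by rewrite !ffunE no_lt0 orbF.
  by rewrite !inE no_lt0 orbF.
cbn [sim]; case: insubP => [i _ iv|]; last by rewrite lt_nm.
rewrite IH; last exact: ltnW.
rewrite /sim_step; cbn [fst snd]; congr pair.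
  apply/ffunP => f; rewrite !ffunE -iv exists_ord_ltS.
  by rewrite -orbA [_ && neighb _ _]andbC.
by apply/setP => f; rewrite !inE -iv exists_ord_ltS eq_sym !orbA.
Qed.

Lemma sim_full_stable (sigma : order) n k :
  (sim bnd sigma n).2 = setT -> sim bnd sigma (n + k) = sim bnd sigma n.
Proof.
move=> full; elim: k => [|k IH]; first by rewrite addn0.
rewrite addnS; cbn [sim]; case: insub => [i|]; last exact: IH.
rewrite IH /sim_step; move: full; case: (sim bnd sigma n) => eta C /= ->.
by congr pair; [apply/ffunP => f; rewrite ffunE in_setT orbF | apply/setP => f; rewrite !inE].
Qed.

Lemma sim_covered_full (sigma : order) : injective sigma -> sim_covered sigma m = setT.
Proof.
move=> inj; apply/setP => f; rewrite !inE; have [i <-] := order_onto inj f.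
by apply/orP; right; apply/existsP; exists i; rewrite ltn_ord eqxx.
Qed.

Lemma eta_star_sim (sigma : order) : injective sigma -> eta_star bnd sigma = sim_config sigma m.
Proof.
move=> inj; rewrite /eta_star /first_full.
set full := fun n => (sim bnd sigma n).2 == setT.
have full_m : full m by rewrite /full simE // sim_covered_full.
have has_full : has full (iota 0 m.+1).
  by apply/hasP; exists m; [rewrite mem_iota add0n ltnSn | exact: full_m].
have := nth_find 0 has_full; move: has_full; rewrite has_find size_iota => lt_m.
rewrite nth_iota // add0n; set n0 := find full _ => /eqP full_n0.
rewrite -(sim_full_stable (m - n0) full_n0) subnKC; last by rewrite -ltnS.
by rewrite simE.
Qed.

Lemma sim_config_order (sigma : order) : injective sigma -> sim_config sigma m = order_config sigma.
Proof.
move=> inj; apply/ffunP => f; have [p <-] := order_onto inj f; rewrite !ffunE.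
have [if_|] //= := boolP (internal (sigma p)).
apply/existsP/existsP => [[i /and3P[_ nfi ncov]] | [g]].
  exists (sigma i); rewrite nfi precedesE //.
  case: (ltngtP i p) => // [pi|/val_inj ip]; last by rewrite ip neighb_irr in nfi.
  by case/negP: ncov; rewrite inE if_ /=; apply/existsP; exists p; rewrite pi eqxx.
have [j <-] := order_onto inj g; rewrite precedesE // => /andP[nfj jp].
pose P k := neighb (val (sigma p)) (val (sigma k)).
have [k nfk kmin] := arg_minnP (P := P) (fun k : 'I_m => nat_of_ord k) nfj.
exists k; rewrite ltn_ord [neighb _ _]nfk inE if_ /=.
apply/existsP => -[l /andP[lk /orP[/eqP/inj lp | nfl]]].
  by have := leq_trans lk (kmin j nfj); rewrite lp ltnNge ltnW.
by have := kmin l nfl; rewrite leqNgt lk.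
Qed.

Definition move_front (sigma : order) (k : 'I_m) : order :=
  [ffun i => sigma (invF (@front_inj m k) i)].

Lemma move_front_front (sigma : order) k j : move_front sigma k (front k j) = sigma j.
Proof. by rewrite ffunE invF_f. Qed.

Lemma move_front_inj (sigma : order) k : injective sigma -> injective (move_front sigma k).
Proof. by move=> inj i j; rewrite !ffunE => /inj/(can_inj (f_invF (@front_inj m k))). Qed.

Lemma sum_move_front (R : zmodType) (F : order -> R) k :
  \sum_(sigma in bijections E) F (move_front sigma k) = \sum_(sigma in bijections E) F sigma.
Proof.
pose back (sigma : order) : order := [ffun i => sigma (front k i)].
have move_frontK : cancel (move_front^~ k) back.
  by move=> sigma /=; apply/ffunP => i; rewrite ffunE move_front_front.
have move_frontKV : cancel back (move_front^~ k).
  by move=> sigma /=; apply/ffunP => i; rewrite !ffunE f_invF.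
rewrite [RHS](reindex (move_front^~ k)) /=; last exact/onW_bij/(Bijective move_frontK).
apply: eq_bigl => sigma; rewrite !inE; apply/injectiveP/injectiveP; first exact: move_front_inj.
by move=> inj i j eq_ij; apply: (@front_inj m k); apply: inj; rewrite !move_front_front.
Qed.

Lemma precedes_move_front (sigma : order) k g f : injective sigma ->
  precedes (move_front sigma k) g f =
  ((g == sigma k) && (f != sigma k)) || [&& g != sigma k, f != sigma k & precedes sigma g f].
Proof.
move=> inj; have [[i <-] [j <-]] := (order_onto inj f, order_onto inj g).
rewrite -[sigma i](move_front_front _ k) -[sigma j](move_front_front _ k).
rewrite precedesE ?front_lt; last exact: move_front_inj.
by rewrite !move_front_front precedesE // !(inj_eq inj).
Qed.

Lemma order_config_move_front (sigma : order) k : injective sigma ->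
  order_config (move_front sigma k) = spike (sigma k) (order_config sigma).
Proof.
move=> inj; apply/ffunP => f; rewrite !ffunE -internalE.
case: (f =P sigma k) => [->|/eqP nfk] /=.
  rewrite neighb_irr; case: (internal (sigma k)) => //=.
  by apply/existsP => -[g]; rewrite precedes_move_front // eqxx !andbF.
case nb: (neighb _ _).
  by apply/orP; right; apply/existsP; exists (sigma k); rewrite nb precedes_move_front // eqxx nfk.
apply: orb_id2l => _; apply: eq_existsb => g; rewrite precedes_move_front //.
by case: (g =P sigma k) => [->|_]; rewrite ?nb // nfk.
Qed.

Lemma sum_generator_order_config (R : pzRingType) (g : config -> R) :
  \sum_(sigma in bijections E) generator bnd g (order_config sigma) = 0.
Proof.
transitivity (\sum_(sigma in bijections E) \sum_(k : 'I_m)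
    (g (order_config (move_front sigma k)) - g (order_config sigma))).
  apply: eq_bigr => sigma; rewrite inE => /injectiveP inj.
  rewrite generatorE ?order_config_admissible // (reindex sigma); last first.
    by apply/onW_bij/inj_card_bij; rewrite ?card_ord.
  by apply: eq_bigr => k _; rewrite order_config_move_front.
rewrite exchange_big /=; apply: big1 => k _; apply/eqP.
by rewrite sumrB subr_eq0; apply/eqP/(sum_move_front (fun sigma => g (order_config sigma))).
Qed.

Lemma eta_star_order (sigma : order) :
  sigma \in bijections E -> eta_star bnd sigma = order_config sigma.
Proof. by rewrite inE => /injectiveP inj; rewrite eta_star_sim // sim_config_order. Qed.

Lemma bijections_gt0 : (0 < #|bijections E|)%N.
Proof.
apply/card_gt0P; exists [ffun i : 'I_m => enum_val i].
by rewrite inE; apply/injectiveP => i j; rewrite !ffunE; apply: enum_val_inj.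
Qed.

Section Law.
Variable R : realFieldType.
Local Notation law := (@law_eta_star T bnd E R).

Lemma sum_law_eta_star (G : config -> R) :
  \sum_eta law eta * G eta =
    (\sum_(sigma in bijections E) G (order_config sigma)) / #|bijections E|%:R.
Proof.
rewrite sum_uniform_pushforward; congr (_ / _).
by apply: eq_bigr => sigma /eta_star_order->.
Qed.

Lemma law_eta_star_out eta : ~~ admissible eta -> law eta = 0.
Proof.
move=> nad; apply/eqP; rewrite mulf_eq0 pnatr_eq0 cards_eq0; apply/orP; left.
apply/eqP/setP => sigma; rewrite !inE; apply/negbTE/andP => -[/injectiveP inj /eqP es].
case/negP: nad; rewrite -es eta_star_order ?inE; last exact/injectiveP.
exact: order_config_admissible.
Qed.

Lemma law_eta_star_prob : prob_on_states bnd law.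
Proof.
split=> [eta||]; first by rewrite divr_ge0 ?ler0n.
  exact: law_eta_star_out.
under eq_bigr do rewrite -[law _]mulr1.
by rewrite sum_law_eta_star sumr_const divff // pnatr_eq0 -lt0n bijections_gt0.
Qed.

Lemma law_eta_star_invariant : invariant_measure bnd law.
Proof.
move=> g; transitivity (\sum_eta law eta * generator bnd g eta).
  rewrite [RHS](bigID admissible) /= [X in _ = _ + X]big1 ?addr0 // => eta.
  by move/law_eta_star_out->; rewrite mul0r.
by rewrite sum_law_eta_star sum_generator_order_config mul0r.
Qed.

End Law.
End SpikingProcess.

Theorem mainTheorem9 (R : realFieldType) (T : finType) (bnd : {set T})
    (E : {set T * T})
    (loopless : forall e, e \in E -> e.1 != e.2)
    (oriented : forall i j, (i, j) \in E -> (j, i) \notin E)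
    (bnd_orient : forall e, e \in E -> e.1 \notin bnd)
    (conn : graph_connected E) :
  let mu := @law_eta_star T bnd E R in
  [/\ prob_on_states bnd mu,
      invariant_measure bnd mu
    & forall nu : config E -> R,
        prob_on_states bnd nu -> invariant_measure bnd nu -> nu = mu].
Proof.
move=> mu; have mu_prob : prob_on_states bnd mu by apply: law_eta_star_prob.
have mu_inv : invariant_measure bnd mu by apply: law_eta_star_invariant.
split=> // nu nu_prob nu_inv; apply: functional_extensionality.
exact: (invariant_measure_unique bnd_orient nu_prob nu_inv mu_prob mu_inv).
Qed.
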